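(* Let $f$ be a biderivation of $\mathcal{SV}(0)$, and let $\phi,\psi:\mathcal{SV}(0)\to\mathcal{SV}(0)$ be linear maps and $\rho_1,\rho_2,\rho_3,\theta_1,\theta_2,\theta_3$ linear complex-valued functions on $\mathcal{SV}(0)$ such that for all $x,y$, $$f(x,y)=\sum_{i=1}^3\rho_i(x)D_i(y)+[\phi(x),y]=\sum_{i=1}^3\theta_i(y)D_i(x)+[x,\psi(y)].$$ Let $\lambda\in\mathbb{C}$ be such that $\phi(L_m)-\lambda L_m\in\mathfrak{M}$ and $\psi(L_m)-\lambda L_m\in\mathfrak{M}$ for all $m\in\mathbb{Z}$ (such $\lambda$ exists). Then for every $n\in\mathbb{Z}$ there are $w_0^{(n)},o_0^{(n)}\in\mathbb{C}$ with $$\phi(M_n)=\lambda M_n+w_0^{(n)}M_0,\qquad \psi(M_n)=\lambda M_n+o_0^{(n)}M_0,$$ and moreover $\rho_i(M_n)=\theta_i(M_n)=0$ for $i=1,2,3$ and all $n\in\mathbb{Z}$.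
   Context: $\mathcal{SV}(0)$ is the complex Lie algebra with basis $\{L_i,Y_i,M_i\mid i\in\mathbb{Z}\}$ and brackets $[L_m,L_n]=(m-n)L_{m+n}$, $[L_m,Y_n]=(\frac12 m-n)Y_{m+n}$, $[L_m,M_n]=-nM_{m+n}$, $[Y_m,Y_n]=(m-n)M_{m+n}$, $[Y_m,M_n]=[M_m,M_n]=0$; $\mathfrak{M}=\bigoplus_{i\in\mathbb{Z}}\mathbb{C}M_i$. A biderivation of a Lie algebra $L$ is a bilinear map $f:L\times L\to L$ with $f([x,y],z)=[x,f(y,z)]+[f(x,z),y]$ and $f(x,[y,z])=[f(x,y),z]+[y,f(x,z)]$ for all $x,y,z\in L$. The linear maps $D_1,D_2,D_3$ are defined by $D_1(L_m)=M_m$, $D_1(Y_m)=D_1(M_m)=0$; $D_2(L_m)=mM_m$, $D_2(Y_m)=D_2(M_m)=0$; $D_3(L_m)=0$, $D_3(Y_m)=Y_m$, $D_3(M_m)=2M_m$. *)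

From HB Require Import structures.
From mathcomp Require Import all_boot all_order all_algebra.
From mathcomp Require Import finmap.
From mathcomp.multinomials Require Import monalg.
Set Implicit Arguments. Unset Strict Implicit. Unset Printing Implicit Defensive.
Import Order.TTheory GRing.Theory Num.Theory.
Local Open Scope ring_scope.

Section SV0.
Variable C : numClosedFieldType.

(* Basis index: (kind, m) with kind 0 = L, 1 = Y, 2 = M. *)
Definition SVidx := ('I_3 * int)%type.

(* SV(0) = the C-vector space with basis {L_m, Y_m, M_m | m in Z}:
   finitely supported functions SVidx -> C. *)
Definition SV := {malg C[SVidx]}.

Definition kL : 'I_3 := @Ordinal 3 0 isT.
Definition kY : 'I_3 := @Ordinal 3 1 isT.
Definition kM : 'I_3 := @Ordinal 3 2 isT.

Definition Lb (m : int) : SV := << (kL, m) >>.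
Definition Yb (m : int) : SV := << (kY, m) >>.
Definition Mb (m : int) : SV := << (kM, m) >>.

Definition lext (g : SVidx -> SV) (x : SV) : SV :=
  \sum_(a <- msupp x) x@_a *: g a.

Definition zc (m : int) : C := m%:~R.

Definition brb (a b : SVidx) : SV :=
  let m := a.2 in let n := b.2 in
  match nat_of_ord a.1, nat_of_ord b.1 with
  | 0, 0 => (zc m - zc n) *: Lb (m + n)
  | 0, 1 => (zc m / 2%:R - zc n) *: Yb (m + n)
  | 0, 2 => (- zc n) *: Mb (m + n)
  | 1, 0 => (zc m - zc n / 2%:R) *: Yb (m + n)     (* [Y_m,L_n] = -[L_n,Y_m] *)
  | 2, 0 => zc m *: Mb (m + n)                     (* [M_m,L_n] = -[L_n,M_m] *)
  | 1, 1 => (zc m - zc n) *: Mb (m + n)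
  | _, _ => 0
  end.

Definition br (x y : SV) : SV := lext (fun a => lext (brb a) y) x.

Definition inMM (x : SV) : Prop := forall a : SVidx, a.1 != kM -> x@_a = 0.

(* D_1, D_2, D_3 (indexed 0,1,2) *)
Definition D1b (a : SVidx) : SV := if a.1 == kL then Mb a.2 else 0.
Definition D2b (a : SVidx) : SV := if a.1 == kL then zc a.2 *: Mb a.2 else 0.
Definition D3b (a : SVidx) : SV :=
  if a.1 == kY then Yb a.2 else if a.1 == kM then 2%:R *: Mb a.2 else 0.

Definition Dmap (i : 'I_3) : SV -> SV :=
  match nat_of_ord i with
  | 0 => lext D1b
  | 1 => lext D2b
  | _ => lext D3b
  end.

Definition is_biderivation (f : SV -> SV -> SV) : Prop :=
  (forall x, linear (f x)) /\ (forall y, linear (fun x => f x y)) /\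
  (forall x y z, f (br x y) z = br x (f y z) + br (f x z) y) /\
  (forall x y z, f x (br y z) = br (f x y) z + br y (f x z)).

End SV0.

From HB Require Import structures.
From mathcomp Require Import all_boot all_order all_algebra.
From mathcomp Require Import finmap.
From mathcomp.multinomials Require Import monalg.
From mathcomp Require Import zify ring.
Import GRing.Theory Num.Theory.
Local Open Scope ring_scope.
Set Implicit Arguments. Unset Strict Implicit.

(* At (M_n, L_m)
   the L- and Y-coefficients of phi(M_n) get multiplied by eigenvalue
   differences of ad L_m that can be made nonzero, so they vanish, and the
   M-coefficients c_k of phi(M_n) satisfy, for all k and m,
     (rho_1 + m rho_2)(M_n) [k = 0] + k c_k
       = 2 theta_3(L_m) [k + m = n] + lam n [k = n],
   which forces rho_1(M_n) = rho_2(M_n) = 0 and c_k = lam [k = n] for k <> 0.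
   At (M_n, Y_0) it gives rho_3(M_n) = 0.  By antisymmetry of the bracket,
   (psi, phi, -theta, -rho) satisfy the same identity with the arguments
   exchanged, which yields the claims on psi and theta. *)

Lemma malg_eq_add_coef (K : choiceType) (R : nzRingType) (u v : {malg R[K]}) (a : K) :
  (forall c, c != a -> u@_c = v@_c) -> u = v + (u - v)@_a *: << a >>.
Proof.
move=> uv; apply/malgP => c; rewrite mcoeffD mcoeffZ mcoeffU mcoeffB.
have [<-|ac] := eqVneq a c; first by rewrite mulr1 addrC subrK.
by rewrite mulr0 addr0 uv // eq_sym.
Qed.

Lemma delta_identity_coef (R : numDomainType) (n : int) (r1 r2 lam : R) (c T : int -> R) :
  (forall m k, (r1 + r2 * m%:~R) * (k == 0)%:R + c k * k%:~R
               = T m * (k + m == n)%:R + lam * (k == n)%:R * n%:~R) ->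
  [/\ r1 = 0, r2 = 0 & forall k, k != 0 -> c k = lam * (k == n)%:R].
Proof.
move=> eq_mk.
have affine0 m : m != n -> r1 + r2 * m%:~R = 0.
  move=> mn; have := eq_mk m 0; rewrite eqxx mulr1 mulr0 addr0 add0r.
  by rewrite (negbTE mn) mulr0 add0r; case: eqVneq => [<-|]; rewrite ?mulr0 ?mul0r.
have r2_0 : r2 = 0.
  have -> : r2 = (r1 + r2 * (n + 2)%:~R) - (r1 + r2 * (n + 1)%:~R).
    by rewrite !intrD; ring.
  by rewrite !affine0 ?subrr //; apply/eqP; lia.
split=> // [|k k0].
  by have := affine0 (n + 1) ltac:(apply/eqP; lia); rewrite r2_0 mul0r addr0.
have := eq_mk (n + 1 - k) k; rewrite (negbTE k0) mulr0 add0r.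
have -> : (k + (n + 1 - k) == n) = false by apply/eqP; lia.
rewrite mulr0 add0r; have [<-|_] := eqVneq k n.
  by rewrite mulr1 => /mulIf; apply; rewrite intr_eq0.
by rewrite !mulr0 mul0r => /eqP; rewrite mulf_eq0 intr_eq0 (negbTE k0) orbF => /eqP.
Qed.

Section SV0.
Variable C : numClosedFieldType.
Implicit Types (x y : SV C) (g : SVidx -> SV C) (a b c : SVidx).

Lemma lextU g a : lext g << a >> = g a.
Proof. by rewrite /lext msuppU oner_eq0 big_seq_fset1 mcoeffUU scale1r. Qed.

Lemma mcoeff_lext g x c : (lext g x)@_c = \sum_(a <- msupp x) x@_a * (g a)@_c.
Proof. by rewrite /lext raddf_sum; apply: eq_bigr => a _; exact: mcoeffZ. Qed.

Lemma big_msupp_delta x a0 (F : SVidx -> C) : (forall a, a != a0 -> F a = 0) ->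
  \sum_(a <- msupp x) x@_a * F a = x@_a0 * F a0.
Proof.
move=> F0; have [a0x|a0Nx] := boolP (a0 \in msupp x).
  rewrite (big_fsetD1 a0) //= big1_fset ?addr0 // => a.
  by rewrite in_fsetD1 => /andP[ne _] _; rewrite F0 ?mulr0.
rewrite big1_fset ?mcoeff_outdom ?mul0r // => a ax _.
by rewrite F0 ?mulr0 //; apply: contraNneq a0Nx => <-.
Qed.

Lemma mcoeff_br_r a0 x b c : (forall a, a != a0 -> (brb C a b)@_c = 0) ->
  (br x << b >>)@_c = x@_a0 * (brb C a0 b)@_c.
Proof.
move=> off; rewrite /br mcoeff_lext -(big_msupp_delta x off).
by apply: eq_bigr => a _; rewrite lextU.
Qed.

Lemma mcoeff_br_l b0 a y c : (forall b, b != b0 -> (brb C a b)@_c = 0) ->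
  (br << a >> y)@_c = y@_b0 * (brb C a b0)@_c.
Proof. by move=> off; rewrite /br lextU mcoeff_lext (big_msupp_delta y off). Qed.

Lemma brb_antisym a b : brb C b a = - brb C a b.
Proof.
case: a b => [[[|[|[|//]]] ?] m] [[[|[|[|//]]] ?] n]; rewrite /brb /= ?oppr0 //;
  by rewrite -scaleNr ?[n + m]addrC ?opprB ?opprK.
Qed.

Lemma brE x y :
  br x y = \sum_(a <- msupp x) \sum_(b <- msupp y) (x@_a * y@_b) *: brb C a b.
Proof.
apply: eq_bigr => a _; rewrite /lext scaler_sumr.
by apply: eq_bigr => b _; rewrite scalerA.
Qed.

Lemma br_antisym x y : br y x = - br x y.
Proof.
rewrite !brE exchange_big -sumrN; apply: eq_bigr => a _.
rewrite -sumrN; apply: eq_bigr => b _.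
by rewrite brb_antisym scalerN mulrC.
Qed.

Ltac brb_coef :=
  rewrite /brb /Lb /Yb /Mb /= ?mcoeff0 ?mcoeffZ ?mcoeffU ?xpair_eqE ?eqxx /= ?mulr1 ?mulr0.

(* [brb a b] lives on the single index of kind determined by [a.1, b.1] and
   level [a.2 + b.2]; once [b] and the target index are fixed, so is [a]. *)
Ltac brb_off_support :=
  move=> [[[|[|[|//]]] ?] ?]; brb_coef => //;
  rewrite ?(inj_eq (addIr _)) ?(inj_eq (addrI _)) => /negbTE ->; exact: mulr0.

Lemma mcoeff_br_Lb_L x m k : (br x (Lb C m))@_(kL, k + m) = x@_(kL, k) * (zc C k - zc C m).
Proof. by rewrite (mcoeff_br_r (a0 := (kL, k))); [brb_coef | brb_off_support]. Qed.

Lemma mcoeff_br_Lb_Y x m k :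
  (br x (Lb C m))@_(kY, k + m) = x@_(kY, k) * (zc C k - zc C m / 2%:R).
Proof. by rewrite (mcoeff_br_r (a0 := (kY, k))); [brb_coef | brb_off_support]. Qed.

Lemma mcoeff_br_Lb_M x m k : (br x (Lb C m))@_(kM, k + m) = x@_(kM, k) * zc C k.
Proof. by rewrite (mcoeff_br_r (a0 := (kM, k))); [brb_coef | brb_off_support]. Qed.

Lemma mcoeff_br_Yb_Y x m k :
  (br x (Yb C m))@_(kY, k + m) = x@_(kL, k) * (zc C k / 2%:R - zc C m).
Proof. by rewrite (mcoeff_br_r (a0 := (kL, k))); [brb_coef | brb_off_support]. Qed.

Lemma mcoeff_Mb_br_M n y j : (br (Mb C n) y)@_(kM, j) = y@_(kL, j - n) * zc C n.
Proof.
by rewrite -{1}(subrKC n j) (mcoeff_br_l (b0 := (kL, j - n))); [brb_coef | brb_off_support].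
Qed.

Lemma mcoeff_Mb_br_notM n y c : c.1 != kM -> (br (Mb C n) y)@_c = 0.
Proof.
case: c => [[[|[|[|//]]] ?] j] // _;
  by rewrite (mcoeff_br_l (b0 := (kL, j))); [brb_coef | brb_off_support].
Qed.

Lemma kind_cases (i : 'I_3) : [\/ i = kL, i = kY | i = kM].
Proof.
by case: i => [[|[|[|//]]] ?]; [constructor 1 | constructor 2 | constructor 3]; apply: val_inj.
Qed.

Lemma eq_pair_kind (i : 'I_3) (a b : int) : ((i, a) == (i, b)) = (a == b).
Proof. by rewrite xpair_eqE eqxx. Qed.

Lemma big_ord3 (F : 'I_3 -> SV C) : \sum_(i < 3) F i = F kL + F kY + F kM.
Proof.
rewrite !big_ord_recr big_ord0 /= add0r.
by congr (F _ + F _ + F _); apply: val_inj.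
Qed.

Lemma sum_Dmap_Lb (s : 'I_3 -> C) m :
  \sum_(i < 3) s i *: Dmap i (Lb C m) = (s kL + s kY * zc C m) *: Mb C m.
Proof.
by rewrite big_ord3 /Dmap /= !lextU /D1b /D2b /D3b /= scaler0 addr0 scalerA scalerDl.
Qed.

Lemma sum_Dmap_Yb (s : 'I_3 -> C) m : \sum_(i < 3) s i *: Dmap i (Yb C m) = s kM *: Yb C m.
Proof. by rewrite big_ord3 /Dmap /= !lextU /D1b /D2b /D3b /= !scaler0 !add0r. Qed.

Lemma sum_Dmap_Mb (s : 'I_3 -> C) n :
  \sum_(i < 3) s i *: Dmap i (Mb C n) = (s kM * 2%:R) *: Mb C n.
Proof. by rewrite big_ord3 /Dmap /= !lextU /D1b /D2b /D3b /= !scaler0 !add0r scalerA. Qed.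

Lemma sum_Dmap_opp (s : 'I_3 -> C) z :
  \sum_(i < 3) - s i *: Dmap i z = - \sum_(i < 3) s i *: Dmap i z.
Proof. by rewrite -sumrN; apply: eq_bigr => i _; rewrite scaleNr. Qed.

Lemma zc_sub_succ_neq0 k : zc C k - zc C (k + 1) != 0.
Proof. by rewrite /zc -intrB intr_eq0; apply/eqP; lia. Qed.

Lemma mcoeffZU s a c : (s *: << a >> : SV C)@_c = s * (a == c)%:R.
Proof. by rewrite mcoeffZ mcoeffU. Qed.

Definition repr_agree (phi psi : SV C -> SV C) (rho theta : 'I_3 -> SV C -> C) :=
  forall x y, \sum_(i < 3) rho i x *: Dmap i y + br (phi x) y =
              \sum_(i < 3) theta i y *: Dmap i x + br x (psi y).

Lemma repr_agree_swap phi psi rho theta : repr_agree phi psi rho theta ->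
  repr_agree psi phi (fun i x => - theta i x) (fun i y => - rho i y).
Proof.
move=> repr_eq x y.
rewrite [in LHS](sum_Dmap_opp (theta^~ x)) [in LHS](br_antisym y (psi x)) -[LHS]opprD.
rewrite [in RHS](sum_Dmap_opp (rho^~ y)) [in RHS](br_antisym (phi y) x) -[RHS]opprD.
by rewrite [in RHS](repr_eq y x).
Qed.

Section AgreeingRepresentations.
Variables (phi psi : SV C -> SV C) (rho theta : 'I_3 -> SV C -> C) (lam : C).
Hypothesis repr_eq : repr_agree phi psi rho theta.
Hypothesis psi_Lb : forall m, inMM (psi (Lb C m) - lam *: Lb C m).

Lemma mcoeff_psi_Lb_L m j : (psi (Lb C m))@_(kL, j) = lam * (m == j)%:R.
Proof.
have /eqP := @psi_Lb m (kL, j) isT.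
by rewrite mcoeffB mcoeffZU subr_eq0 => /eqP ->; rewrite eq_pair_kind.
Qed.

(* Inside these coefficient identities we rewrite only at explicit positions
   ([X in _] patterns, [exact] for whole sides): a plain [rewrite] tries to
   unify distinct sums and brackets, unfolding them into malg computations
   that do not terminate in practice. *)
Lemma mcoeff_repr_eq x y c :
  (\sum_(i < 3) rho i x *: Dmap i y)@_c + (br (phi x) y)@_c =
  (\sum_(i < 3) theta i y *: Dmap i x)@_c + (br x (psi y))@_c.
Proof.
exact: etrans (esym (mcoeffD c _ _)) (etrans (congr1 (mcoeff c) (repr_eq x y)) (mcoeffD c _ _)).
Qed.

Lemma mcoeff_repr_Mb_Lb n m c :
  ((rho kL (Mb C n) + rho kY (Mb C n) * zc C m) *: Mb C m)@_c
    + (br (phi (Mb C n)) (Lb C m))@_c =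
  ((theta kM (Lb C m) * 2%:R) *: Mb C n)@_c + (br (Mb C n) (psi (Lb C m)))@_c.
Proof.
rewrite -(sum_Dmap_Lb (rho^~ (Mb C n))) -(sum_Dmap_Mb (theta^~ (Lb C m))).
exact: mcoeff_repr_eq.
Qed.

Lemma mcoeff_repr_Mb_Yb n m c :
  (rho kM (Mb C n) *: Yb C m)@_c + (br (phi (Mb C n)) (Yb C m))@_c =
  ((theta kM (Yb C m) * 2%:R) *: Mb C n)@_c + (br (Mb C n) (psi (Yb C m)))@_c.
Proof.
rewrite -(sum_Dmap_Yb (rho^~ (Mb C n))) -(sum_Dmap_Mb (theta^~ (Yb C m))).
exact: mcoeff_repr_eq.
Qed.

Lemma repr_Mb_Lb_coefL n m k : (phi (Mb C n))@_(kL, k) * (zc C k - zc C m) = 0.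
Proof.
have := mcoeff_repr_Mb_Lb n m (kL, k + m).
rewrite [X in _ + X = _]mcoeff_br_Lb_L [X in _ = _ + X]mcoeff_Mb_br_notM //.
by rewrite [X in X + _ = _]mcoeffZU [X in _ = X + _]mcoeffZU /= !mulr0 add0r addr0.
Qed.

Lemma repr_Mb_Lb_coefY n m k : (phi (Mb C n))@_(kY, k) * (zc C k - zc C m / 2%:R) = 0.
Proof.
have := mcoeff_repr_Mb_Lb n m (kY, k + m).
rewrite [X in _ + X = _]mcoeff_br_Lb_Y [X in _ = _ + X]mcoeff_Mb_br_notM //.
by rewrite [X in X + _ = _]mcoeffZU [X in _ = X + _]mcoeffZU /= !mulr0 add0r addr0.
Qed.

Lemma repr_Mb_Lb_coefM n m k :
  (rho kL (Mb C n) + rho kY (Mb C n) * zc C m) * (k == 0)%:R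
    + (phi (Mb C n))@_(kM, k) * zc C k =
  theta kM (Lb C m) * 2%:R * (k + m == n)%:R + lam * (k == n)%:R * zc C n.
Proof.
have := mcoeff_repr_Mb_Lb n m (kM, k + m).
rewrite [X in _ + X = _]mcoeff_br_Lb_M [X in _ = _ + X]mcoeff_Mb_br_M mcoeff_psi_Lb_L.
rewrite [X in X + _ = _]mcoeffZU [X in _ = X + _]mcoeffZU !eq_pair_kind.
have -> : (m == k + m) = (k == 0) by apply/eqP/eqP; lia.
have -> : (n == k + m) = (k + m == n) by apply/eqP/eqP; lia.
by have -> : (m == k + m - n) = (k == n) by apply/eqP/eqP; lia.
Qed.

Lemma mcoeff_phi_Mb_L n k : (phi (Mb C n))@_(kL, k) = 0.
Proof.
by apply: (mulIf (zc_sub_succ_neq0 k)); rewrite mul0r (repr_Mb_Lb_coefL n (k + 1)).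
Qed.

Lemma mcoeff_phi_Mb_Y n k : (phi (Mb C n))@_(kY, k) = 0.
Proof.
have half_double : zc C (2 * (k + 1)) / 2%:R = zc C (k + 1) by rewrite /zc intrM; field.
apply: (mulIf (zc_sub_succ_neq0 k)).
by rewrite mul0r -half_double (repr_Mb_Lb_coefY n (2 * (k + 1))).
Qed.

Lemma rho_kM_Mb n : rho kM (Mb C n) = 0.
Proof.
have := mcoeff_repr_Mb_Yb n 0 (kY, 0 + 0).
rewrite [X in _ + X = _]mcoeff_br_Yb_Y mcoeff_phi_Mb_L [X in _ = _ + X]mcoeff_Mb_br_notM //.
by rewrite [X in X + _ = _]mcoeffZU [X in _ = X + _]mcoeffZU /= mulr1 mul0r !mulr0 !addr0.
Qed.

Lemma rho_Mb_mcoeff_phi_Mb_M n : [/\ rho kL (Mb C n) = 0, rho kY (Mb C n) = 0 &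
  forall k, k != 0 -> (phi (Mb C n))@_(kM, k) = lam * (k == n)%:R].
Proof. exact: delta_identity_coef (repr_Mb_Lb_coefM n). Qed.

Lemma rho_Mb i n : rho i (Mb C n) = 0.
Proof.
have [? ? _] := rho_Mb_mcoeff_phi_Mb_M n.
by case: (kind_cases i) => ->; rewrite ?rho_kM_Mb.
Qed.

Lemma phi_Mb n :
  phi (Mb C n) = lam *: Mb C n + (phi (Mb C n) - lam *: Mb C n)@_(kM, 0) *: Mb C 0.
Proof.
apply: malg_eq_add_coef => -[i k]; rewrite [in RHS]mcoeffZU.
case: (kind_cases i) => -> /=; rewrite ?mcoeff_phi_Mb_L ?mcoeff_phi_Mb_Y ?mulr0 //.
rewrite !xpair_eqE /= => k_neq0.
by have [_ _ ->] := rho_Mb_mcoeff_phi_Mb_M n; rewrite // eq_sym.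
Qed.

End AgreeingRepresentations.
End SV0.

Theorem lemma3p4 (C : numClosedFieldType)
  (f : SV C -> SV C -> SV C)
  (phi psi : {linear SV C -> SV C})
  (rho theta : 'I_3 -> {scalar SV C})
  (lam : C) :
  is_biderivation f ->
  (forall x y, f x y = \sum_(i < 3) rho i x *: Dmap i y + br (phi x) y) ->
  (forall x y, f x y = \sum_(i < 3) theta i y *: Dmap i x + br x (psi y)) ->
  (forall m : int, inMM (phi (Lb C m) - lam *: Lb C m)) ->
  (forall m : int, inMM (psi (Lb C m) - lam *: Lb C m)) ->
  (forall n : int, exists w o : C,
      phi (Mb C n) = lam *: Mb C n + w *: Mb C 0 /\
      psi (Mb C n) = lam *: Mb C n + o *: Mb C 0) /\
  (forall (i : 'I_3) (n : int), rho i (Mb C n) = 0 /\ theta i (Mb C n) = 0).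
Proof.
move=> _ f_rho f_theta phi_Lb psi_Lb.
have repr_eq : repr_agree phi psi (fun i => rho i) (fun i => theta i).
  by move=> x y; exact: etrans (esym (f_rho x y)) (f_theta x y).
have repr_eq' := repr_agree_swap repr_eq.
split=> [n | i n].
  by do 2 eexists; split; [exact: phi_Mb repr_eq psi_Lb n | exact: phi_Mb repr_eq' phi_Lb n].
split; first exact: rho_Mb repr_eq psi_Lb i n.
by apply/eqP; rewrite -oppr_eq0; apply/eqP; exact: rho_Mb repr_eq' phi_Lb i n.
Qed.
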